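(* Let $\Lambda=\{(V_i,\Lambda_i,v_i)\}_{i\in I}$, $\Lambda'=\{(V_i',\Lambda_i',v_i')\}_{i\in I}$ be g-fusion Bessel sequences in $H$ and $\Gamma=\{(W_j,\Gamma_j,w_j)\}_{j\in J}$, $\Gamma'=\{(W_j',\Gamma_j',w_j')\}_{j\in J}$ be g-fusion Bessel sequences in $K$, and let $S_{\Lambda\Lambda'}$ and $S_{\Gamma\Gamma'}$ be the frame operators for the pairs $(\Lambda,\Lambda')$ and $(\Gamma,\Gamma')$. Let $S$ be the frame operator for the pair of g-fusion Bessel sequences $\Lambda\otimes\Gamma=\{(V_i\otimes W_j,\Lambda_i\otimes\Gamma_j,v_iw_j)\}_{i,j}$ and $\Lambda'\otimes\Gamma'=\{(V_i'\otimes W_j',\Lambda_i'\otimes\Gamma_j',v_i'w_j')\}_{i,j}$ in $H\otimes K$. Then $S=S_{\Lambda\Lambda'}\otimes S_{\Gamma\Gamma'}$.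
   Context: $H,K$ separable Hilbert spaces, $I,J\subseteq\mathbb{Z}$, $\{H_i\}$, $\{K_j\}$ Hilbert spaces; $V_i,V_i'\subseteq H$, $W_j,W_j'\subseteq K$ closed subspaces; $\Lambda_i,\Lambda_i'\in\mathcal{B}(H,H_i)$, $\Gamma_j,\Gamma_j'\in\mathcal{B}(K,K_j)$; all weights positive. $P_V$ is the orthogonal projection onto $V$. A family $\{(V_i,\Lambda_i,v_i)\}$ is a g-fusion Bessel sequence in $H$ if $\sum_iv_i^2\|\Lambda_iP_{V_i}f\|^2\le B\|f\|^2$ for all $f\in H$, some $B$. The frame operator for the pair $(\Lambda,\Lambda')$ is $S_{\Lambda\Lambda'}f=\sum_iv_iv_i'P_{V_i}\Lambda_i^*\Lambda_i'P_{V_i'}f$ (and analogously $S_{\Gamma\Gamma'}$). $H\otimes K$ is the Hilbert tensor product; $Q\otimes T$ is the bounded operator with $(Q\otimes T)(f\otimes g)=Qf\otimes Tg$; $P_{V\otimes W}=P_V\otimes P_W$. The frame operator for the pair $(\Lambda\otimes\Gamma,\Lambda'\otimes\Gamma')$ is $S(f\otimes g)=\sum_{i,j}v_iw_jv_i'w_j'P_{V_i\otimes W_j}(\Lambda_i\otimes\Gamma_j)^*(\Lambda_i'\otimes\Gamma_j')P_{V_i'\otimes W_j'}(f\otimes g)$ for $f\otimes g\in H\otimes K$. *)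

From mathcomp Require Import all_boot all_order all_algebra.
From mathcomp Require Import complex reals.
Set Implicit Arguments. Unset Strict Implicit. Unset Printing Implicit Defensive.
Import Order.TTheory GRing.Theory Num.Theory.
Local Open Scope ring_scope.
Local Open Scope complex_scope.

Section Inner.
Variable R : realType.
Variable V : lmodType R[i].
Variable ip : V -> V -> R[i].

Definition is_inner : Prop :=
  [/\ (forall (a : R[i]) (x y z : V), ip (a *: x + y) z = a * ip x z + ip y z),
      (forall x y : V, ip y x = conjc (ip x y)),
      (forall x : V, 0 <= ip x x) &
      (forall x : V, ip x x = 0 -> x = 0)].

Definition ipnorm (x : V) : R[i] := sqrtC (ip x x).

Definition ip_complete : Prop :=
  forall u : nat -> V,
    (forall e : R[i], 0 < e -> exists N : nat, forall m n : nat,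
        (N <= m)%N -> (N <= n)%N -> ipnorm (u m - u n) < e) ->
    exists l : V, forall e : R[i], 0 < e -> exists N : nat, forall n : nat,
        (N <= n)%N -> ipnorm (u n - l) < e.
End Inner.

Record Hilbert (R : realType) := MkHilbert {
  hsort :> lmodType R[i];
  hip : hsort -> hsort -> R[i];
  hip_inner : is_inner hip;
  hip_complete : ip_complete hip }.

Section HilbertDefs.
Variable R : realType.

Definition hnorm (H : Hilbert R) (x : H) : R[i] := ipnorm (@hip R H) x.

Definition separable (H : Hilbert R) : Prop :=
  exists d : nat -> H, forall (x : H) (e : R[i]), 0 < e ->
    exists n : nat, hnorm (x - d n) < e.

Definition bounded_linear (H1 H2 : Hilbert R) (A : H1 -> H2) : Prop :=
  (forall (a : R[i]) (x y : H1), A (a *: x + y) = a *: A x + A y) /\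
  exists B : R[i], 0 <= B /\ forall x : H1, hnorm (A x) <= B * hnorm x.

Definition is_adjoint (H1 H2 : Hilbert R) (A : H1 -> H2) (Astar : H2 -> H1) : Prop :=
  forall (x : H1) (y : H2), hip (A x) y = hip x (Astar y).

Definition closed_subspace (H : Hilbert R) (V : H -> Prop) : Prop :=
  [/\ V 0,
      (forall (a : R[i]) (x y : H), V x -> V y -> V (a *: x + y)) &
      (forall (x : H), (forall e : R[i], 0 < e -> exists y, V y /\ hnorm (x - y) < e) -> V x)].

Definition is_orth_proj (H : Hilbert R) (V : H -> Prop) (P : H -> H) : Prop :=
  forall x : H, V (P x) /\ forall y : H, V y -> hip (x - P x) y = 0.

(* unconditional convergence of a series indexed by a set A of indices:
   the net of finite partial sums over finite subsets of A converges to s *)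
Definition has_usum (I : eqType) (H : Hilbert R) (A : I -> Prop) (F : I -> H) (s : H) : Prop :=
  forall e : R[i], 0 < e ->
    exists s0 : seq I, uniq s0 /\ (forall k, k \in s0 -> A k) /\
      forall s1 : seq I, uniq s1 -> (forall k, k \in s1 -> A k) ->
        {subset s0 <= s1} -> hnorm (\sum_(k <- s1) F k - s) < e.

(* g-fusion Bessel sequence {(V_i, L_i, v_i)}_{i in I}:
   sum_i v_i^2 ||L_i P_{V_i} f||^2 <= B ||f||^2, i.e. all finite partial sums of
   this nonnegative series are bounded by B ||f||^2. *)
Definition gfusion_bessel (I : int -> Prop) (H : Hilbert R) (Hi : int -> Hilbert R)
    (PV : int -> H -> H) (L : forall i : int, H -> Hi i) (v : int -> R) : Prop :=
  exists B : R[i], 0 < B /\ forall f : H, forall s : seq int, uniq s ->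
    (forall k, k \in s -> I k) ->
    \sum_(i <- s) ((v i) ^+ 2)%:C * (hnorm (L i (PV i f))) ^+ 2 <= B * (hnorm f) ^+ 2.

Definition is_tensor (H K T : Hilbert R) (tens : H -> K -> T) : Prop :=
  [/\ (forall (a : R[i]) (f f' : H) (g : K), tens (a *: f + f') g = a *: tens f g + tens f' g),
      (forall (a : R[i]) (f : H) (g g' : K), tens f (a *: g + g') = a *: tens f g + tens f g'),
      (forall (f f' : H) (g g' : K), hip (tens f g) (tens f' g') = hip f f' * hip g g') &
      (forall (t : T) (e : R[i]), 0 < e -> exists s : seq (R[i] * (H * K)),
          hnorm (t - \sum_(p <- s) p.1 *: tens p.2.1 p.2.2) < e)].

Definition is_op_tensor (H1 K1 T1 H2 K2 T2 : Hilbert R)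
    (tens1 : H1 -> K1 -> T1) (tens2 : H2 -> K2 -> T2)
    (Q : H1 -> H2) (Tt : K1 -> K2) (X : T1 -> T2) : Prop :=
  bounded_linear X /\ forall (f : H1) (g : K1), X (tens1 f g) = tens2 (Q f) (Tt g).
End HilbertDefs.

(* Each term of the frame operator of the tensor pair is [a_i (x) b_j], where
   [a_i] and [b_j] are the terms of [S_{Lambda Lambda'} f] and [S_{Gamma Gamma'} g]:
   on elementary tensors the adjoint of [Lambda_i (x) Gamma_j] is
   [Lambda_i^* (x) Gamma_j^*], by density of their span.  It remains to see that
   [sum a_i = A] and [sum b_j = B] give [sum_{i,j} a_i (x) b_j = A (x) B]
   unconditionally.  This fails for general unconditionally summable families,
   but here [a_i = T_i^* u_i] with [(T_i)] Bessel and [(u_i)] square-summable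
   ([T_i = v_i Lambda_i P_{V_i}], [u_i = v_i' Lambda_i' P_{V_i'} f]), and likewise
   [b_j = S_j^* z_j].  Expanding the second factors in an orthonormal basis
   (Gram-Schmidt) bounds [|sum_{(i,j) in F} a_i (x) b_j|^2], for finite [F], by
   [B_T B_S] times the sum of [|u_i|^2] over the rows of [F] times the largest
   sum of [|z_j|^2] along a row.  So the sum over any finite [F] outside a large
   block [P0 x Q0] is small, while the block itself is
   [(sum_{P0} a_i) (x) (sum_{Q0} b_j)], close to [A (x) B]. *)

From mathcomp Require Import all_boot all_order all_algebra.
From mathcomp Require Import complex reals.
From mathcomp Require Import classical_sets.
From mathcomp Require Import ring lra.
Set Implicit Arguments. Unset Strict Implicit. Unset Printing Implicit Defensive.
Import Order.TTheory GRing.Theory Num.Theory.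
Local Open Scope ring_scope.
Local Open Scope complex_scope.

Section InnerProduct.
Variables (R : realType) (H : Hilbert R).
Implicit Types (a : R[i]) (c : R) (x y z : H).

Definition sqnorm x : R := complex.Re (hip x x).

Lemma hipDZl a x y z : hip (a *: x + y) z = a * hip x z + hip y z.
Proof. by case: (hip_inner H). Qed.

Lemma hipC x y : hip y x = conjc (hip x y).
Proof. by case: (hip_inner H) => _ hC _ _; apply: hC. Qed.

Lemma hipxx_ge0 x : 0 <= hip x x.
Proof. by case: (hip_inner H). Qed.

Lemma hipxx_eq0 x : hip x x = 0 -> x = 0.
Proof. by case: (hip_inner H) => _ _ _; apply. Qed.

Lemma hip0l z : hip 0 z = 0.
Proof.
have := hipDZl 1 0 0 z; rewrite scaler0 addr0 mul1r => h.
by apply: (addrI (hip 0 z)); rewrite addr0 -h.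
Qed.

Lemma hipDl x y z : hip (x + y) z = hip x z + hip y z.
Proof. by rewrite -[x]scale1r hipDZl mul1r scale1r. Qed.

Lemma hipZl a x z : hip (a *: x) z = a * hip x z.
Proof. by rewrite -[a *: x]addr0 hipDZl hip0l addr0. Qed.

Lemma hipNl x z : hip (- x) z = - hip x z.
Proof. by rewrite -scaleN1r hipZl mulN1r. Qed.

Lemma hipBl x y z : hip (x - y) z = hip x z - hip y z.
Proof. by rewrite hipDl hipNl. Qed.

Lemma hip0r z : hip z 0 = 0.
Proof. by rewrite hipC hip0l rmorph0. Qed.

Lemma hipDr x y z : hip z (x + y) = hip z x + hip z y.
Proof. by rewrite hipC hipDl rmorphD; congr (_ + _); apply/esym/hipC. Qed.

Lemma hipZr a x z : hip z (a *: x) = conjc a * hip z x.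
Proof. by rewrite hipC hipZl rmorphM; congr (_ * _); apply/esym/hipC. Qed.

Lemma hipZr_real c x z : hip z (c%:C *: x) = c%:C * hip z x.
Proof. by rewrite hipZr; congr (_ * _); exact: conjc_real. Qed.

Lemma hipNr x z : hip z (- x) = - hip z x.
Proof. by rewrite hipC hipNl rmorphN; congr (- _); apply/esym/hipC. Qed.

Lemma hipBr x y z : hip z (x - y) = hip z x - hip z y.
Proof. by rewrite hipDr hipNr. Qed.

Lemma hip_suml (I : Type) (s : seq I) (F : I -> H) z :
  hip (\sum_(k <- s) F k) z = \sum_(k <- s) hip (F k) z.
Proof. by elim: s => [|k s IH]; rewrite ?big_nil ?hip0l // !big_cons hipDl IH. Qed.

Lemma hip_sumr (I : Type) (s : seq I) (F : I -> H) z :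
  hip z (\sum_(k <- s) F k) = \sum_(k <- s) hip z (F k).
Proof. by elim: s => [|k s IH]; rewrite ?big_nil ?hip0r // !big_cons hipDr IH. Qed.

Lemma hipxx x : hip x x = (sqnorm x)%:C.
Proof. by have := hipxx_ge0 x; rewrite lecE /sqnorm; case: (hip x x) => ? ? /= /andP[/eqP -> _]. Qed.

Lemma sqnorm_ge0 x : 0 <= sqnorm x.
Proof. by rewrite -lecR -hipxx hipxx_ge0. Qed.

Lemma sqnorm_eq0 x : sqnorm x = 0 -> x = 0.
Proof. by move=> x0; apply: hipxx_eq0; rewrite hipxx x0. Qed.

Lemma Re_hipC x y : complex.Re (hip y x) = complex.Re (hip x y).
Proof. by rewrite hipC; case: (hip x y). Qed.

Lemma sqnormD x y : sqnorm (x + y) = sqnorm x + sqnorm y + 2 * complex.Re (hip x y).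
Proof. by rewrite /sqnorm hipDl !hipDr !raddfD /= (Re_hipC x y); ring. Qed.

Lemma sqnormN x : sqnorm (- x) = sqnorm x.
Proof. by rewrite /sqnorm hipNl hipNr opprK. Qed.

Lemma sqnormZ a x : sqnorm (a *: x) = complex.Re (a * conjc a) * sqnorm x.
Proof.
rewrite /sqnorm hipZl hipZr hipxx mulrA.
by have := mulcJ_ge0 a; rewrite lecE; case: (a * conjc a) => ? ? /= /andP[/eqP -> _]; ring.
Qed.

Lemma sqnormZ_real c x : sqnorm (c%:C *: x) = c ^+ 2 * sqnorm x.
Proof. by rewrite sqnormZ /=; ring. Qed.

Lemma sqnorm_sum_orth x y : hip x y = 0 -> sqnorm (x + y) = sqnorm x + sqnorm y.
Proof. by move=> xy0; rewrite sqnormD xy0 mulr0 addr0. Qed.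

Lemma Re_hip_le x y : 2 * complex.Re (hip x y) <= sqnorm x + sqnorm y.
Proof. by have := sqnorm_ge0 (x - y); rewrite sqnormD sqnormN hipNr raddfN /=; lra. Qed.

Lemma Re_hip_le_scaled (t : R) x y : 0 < t ->
  2 * complex.Re (hip x y) <= t * sqnorm x + sqnorm y / t.
Proof.
move=> t0; have := Re_hip_le (t%:C *: x) y; rewrite hipZl sqnormZ_real.
have -> : t * sqnorm x + sqnorm y / t = (t ^+ 2 * sqnorm x + sqnorm y) / t.
  by field; rewrite gt_eqF.
rewrite ler_pdivlMr //; case: (hip x y) => p q /=.
by rewrite mul0r subr0 [2 * p * t]mulrAC -mulrA.
Qed.

Lemma sqnormD_le x y : sqnorm (x + y) <= 2 * sqnorm x + 2 * sqnorm y.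
Proof. by have := Re_hip_le x y; rewrite sqnormD; lra. Qed.

Lemma hnorm_sqr x : hnorm x ^+ 2 = (sqnorm x)%:C.
Proof. by rewrite /hnorm /ipnorm sqrtCK hipxx. Qed.

Lemma hnorm_lt x (e : R[i]) : 0 < e -> (hnorm x < e) = (sqnorm x < complex.Re e ^+ 2).
Proof.
move=> e0; have er : e = (complex.Re e)%:C by rewrite RRe_real ?gtr0_real.
have r0 : 0 <= complex.Re e by rewrite -ler0c -er ltW.
rewrite {1}er -(@ltr_pXn2r _ 2) ?nnegrE ?ler0c ?sqrtC_ge0 ?hipxx_ge0 //.
by rewrite hnorm_sqr -rmorphXn ltcR.
Qed.

End InnerProduct.

Section UnconditionalSums.
Variables (R : realType) (I : eqType).

Lemma has_usum_sqnormP (H : Hilbert R) (A : I -> Prop) (F : I -> H) (s : H) :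
  has_usum A F s <->
  forall eps : R, 0 < eps -> exists s0 : seq I,
    uniq s0 /\ (forall k, k \in s0 -> A k) /\
    forall s1 : seq I, uniq s1 -> (forall k, k \in s1 -> A k) ->
      {subset s0 <= s1} -> sqnorm (\sum_(k <- s1) F k - s) < eps.
Proof.
split=> [hF eps eps0 | hF e e0].
  have [|s0 [us0 [As0 hs0]]] := hF (Num.sqrt eps)%:C; first by rewrite ltcR sqrtr_gt0.
  exists s0; split=> //; split=> // s1 us1 As1 s01.
  by have := hs0 s1 us1 As1 s01; rewrite hnorm_lt ?ltcR ?sqrtr_gt0 //= sqr_sqrtr // ltW.
have [|s0 [us0 [As0 hs0]]] := hF (complex.Re e ^+ 2).
  by rewrite exprn_gt0 // -ltcR RRe_real ?gtr0_real.
by exists s0; split=> //; split=> // s1 us1 As1 s01; rewrite hnorm_lt // hs0.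
Qed.

Lemma eq_has_usum (H : Hilbert R) (A : I -> Prop) (F G : I -> H) (s : H) :
  (forall k, A k -> F k = G k) -> has_usum A F s -> has_usum A G s.
Proof.
move=> FG hF e e0; have [s0 [us0 [As0 hs0]]] := hF e e0.
exists s0; split=> //; split=> // s1 us1 As1 s01.
have -> : \sum_(k <- s1) G k = \sum_(k <- s1) F k.
  by apply: eq_big_seq => k /As1 /FG.
exact: hs0.
Qed.

Lemma has_usum_sqnorm_le (H : Hilbert R) (A : I -> Prop) (F : I -> H) (s : H) (C : R) :
  (forall d : R, 0 < d -> d <= 1 -> exists s0 : seq I,
    uniq s0 /\ (forall k, k \in s0 -> A k) /\
    forall s1 : seq I, uniq s1 -> (forall k, k \in s1 -> A k) ->
      {subset s0 <= s1} -> sqnorm (\sum_(k <- s1) F k - s) <= C * d) ->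
  has_usum A F s.
Proof.
move=> hF; apply/has_usum_sqnormP => eps eps0.
have C1_gt0 : 0 < `|C| + 1 by rewrite ltr_pwDr.
pose d := Num.min 1 (eps / (`|C| + 1)).
have d_gt0 : 0 < d by rewrite lt_min ltr01 divr_gt0.
have dC : C * d < eps.
  apply: le_lt_trans (_ : C * d <= `|C| * d) _; first by apply: ler_wpM2r; [exact: ltW | exact: ler_norm].
  apply: lt_le_trans (_ : `|C| * d < (`|C| + 1) * d) _; first by rewrite ltr_pM2r // ltrDl.
  by rewrite mulrC -ler_pdivlMr // ge_min lexx orbT.
have d_le1 : d <= 1 by rewrite ge_min lexx.
have [s0 [us0 [As0 hs0]]] := hF d d_gt0 d_le1.
exists s0; split=> //; split=> // s1 us1 As1 s01.
exact: le_lt_trans (hs0 s1 us1 As1 s01) dC.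
Qed.

Definition finsum_le (A : I -> Prop) (c : I -> R) (B : R) : Prop :=
  forall s : seq I, uniq s -> (forall k, k \in s -> A k) -> \sum_(k <- s) c k <= B.

Lemma finsum_le_ge0 (A : I -> Prop) (c : I -> R) (B : R) :
  finsum_le A c B -> 0 <= B.
Proof. by move=> hB; have := hB [::]; rewrite big_nil; apply. Qed.

(* The finite sums of [c] have a supremum; a finite sum close to it leaves
   little room for the sums over disjoint index sets. *)
Lemma finsum_le_tail (A : I -> Prop) (c : I -> R) (B : R) :
  finsum_le A c B -> forall eps : R, 0 < eps -> exists s0 : seq I,
    [/\ uniq s0, forall k, k \in s0 -> A k &
        finsum_le (fun k => A k /\ k \notin s0) c eps].
Proof.
move=> hB eps eps0.
pose E : set R := fun x => exists s, [/\ uniq s, forall k, k \in s -> A k &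
                                         x = \sum_(k <- s) c k].
have supE : has_sup E.
  split; first by exists 0, [::]; rewrite big_nil.
  by exists B => _ [s [us As ->]]; apply: hB.
have [_ [s0 [us0 As0 ->]] lt_s0] := sup_adherent eps0 supE.
exists s0; split=> // s us As.
have : E (\sum_(k <- s0 ++ s) c k).
  exists (s0 ++ s); split=> //.
    by rewrite cat_uniq us0 us andbT; apply/hasPn => k /As [].
  by move=> k; rewrite mem_cat => /orP[/As0|/As []].
by move/(sup_upper_bound supE); rewrite big_cat /=; lra.
Qed.

End UnconditionalSums.

Lemma sum_nat_delta (S : pzSemiRingType) n (F : nat -> S) m : (m < n)%N ->
  \sum_(0 <= k < n) (m == k)%:R * F k = F m.
Proof.
move=> mn; rewrite (bigD1_seq m) ?mem_index_iota ?iota_uniq //= eqxx mul1r.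
by rewrite big1 ?addr0 // => k /negbTE; rewrite eq_sym => ->; rewrite mul0r.
Qed.

Section GramSchmidt.
Variables (R : realType) (K : Hilbert R).
Implicit Types (f : nat -> K) (e y z : K).

Definition orthonormal n f : Prop :=
  forall m l, (m < n)%N -> (l < n)%N -> hip (f m) (f l) = (m == l)%:R.

Definition orth_expand n f y : K := \sum_(0 <= m < n) hip y (f m) *: f m.

Lemma hip_orthonormal_sum n f (al be : nat -> R[i]) : orthonormal n f ->
  hip (\sum_(0 <= m < n) al m *: f m) (\sum_(0 <= l < n) be l *: f l)
  = \sum_(0 <= m < n) al m * conjc (be m).
Proof.
move=> onf; rewrite hip_suml; apply: eq_big_nat => m /andP[_ mn].
rewrite hipZl hip_sumr; congr (_ * _).
have /= <- := sum_nat_delta (fun l => conjc (be l)) mn.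
by apply: eq_big_nat => l /andP[_ ln]; rewrite hipZr onf // mulrC.
Qed.

Lemma hip_orth_expand_l n f z e : (forall m, (m < n)%N -> hip (f m) e = 0) ->
  hip (orth_expand n f z) e = 0.
Proof.
move=> fe; rewrite hip_suml big_nat big1 // => m /andP[_ /fe].
by rewrite hipZl => ->; rewrite mulr0.
Qed.

Lemma hip_sub_orth_expand n f y m : orthonormal n f -> (m < n)%N ->
  hip (f m) (y - orth_expand n f y) = 0.
Proof.
move=> onf mn; rewrite hipBr hip_sumr; apply/eqP; rewrite subr_eq0; apply/eqP.
rewrite hipC; have /= <- := sum_nat_delta (fun k => conjc (hip y (f k))) mn.
by apply: eq_big_nat => k /andP[_ kn]; rewrite hipZr onf // mulrC.
Qed.

Lemma orthonormal_extend n f e : orthonormal n f ->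
  (forall m, (m < n)%N -> hip (f m) e = 0) -> hip e e = 1 ->
  orthonormal n.+1 (fun m => if m == n then e else f m).
Proof.
move=> onf fe ee m l; rewrite !ltnS => hm hl.
have [mE|mn] := eqVneq m n; have [lE|ln] := eqVneq l n; rewrite ?mE ?lE ?eqxx.
- exact: ee.
- have ln' : (l < n)%N by rewrite ltn_neqAle ln hl.
  by rewrite hipC fe // conjc0 eq_sym ltn_eqF.
- have mn' : (m < n)%N by rewrite ltn_neqAle mn hm.
  by rewrite fe // ltn_eqF.
- by rewrite onf // ltn_neqAle ?mn ?ln.
Qed.

Lemma orth_expand_extend n f e z :
  orth_expand n.+1 (fun m => if m == n then e else f m) z =
  orth_expand n f z + hip z e *: e.
Proof.
rewrite /orth_expand big_nat_recr //= eqxx; congr (_ + _).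
by apply: eq_big_nat => m /andP[_ mn]; rewrite ltn_eqF.
Qed.

Lemma gram_schmidt (ys : seq K) : exists n f, orthonormal n f /\
  forall y, y \in ys -> y = orth_expand n f y.
Proof.
elim: ys => [|y ys [n [f [onf ys_f]]]]; first by exists 0%N, (fun _ => 0).
pose r := y - orth_expand n f y.
have fr m : (m < n)%N -> hip (f m) r = 0 by apply: hip_sub_orth_expand.
have [r0|rn0] := eqVneq r 0.
  exists n, f; split=> // z; rewrite in_cons => /predU1P[->|/ys_f //].
  by apply/eqP; rewrite -subr_eq0 -/r r0.
have nr0 : 0 < Num.sqrt (sqnorm r).
  rewrite sqrtr_gt0 lt_def sqnorm_ge0 andbT.
  by apply: contra rn0 => /eqP /sqnorm_eq0 ->.
pose e := ((Num.sqrt (sqnorm r))^-1)%:C *: r.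
have fe m : (m < n)%N -> hip (f m) e = 0 by move=> mn; rewrite hipZr fr ?mulr0.
have ee : hip e e = 1.
  by rewrite hipxx sqnormZ_real exprVn sqr_sqrtr ?sqnorm_ge0 ?mulVf ?gt_eqF // -sqrtr_gt0.
exists n.+1, (fun m => if m == n then e else f m).
split; first exact: orthonormal_extend.
move=> z; rewrite orth_expand_extend in_cons => /predU1P[->|/ys_f z_f].
  have -> : hip y e = (Num.sqrt (sqnorm r))%:C.
    rewrite -{1}[y](subrK (orth_expand n f y)) -/r hipDl hip_orth_expand_l // addr0.
    rewrite hipZr_real hipxx -rmorphM -{2}(sqr_sqrtr (sqnorm_ge0 r)) expr2.
    by rewrite mulKf // gt_eqF.
  by rewrite /e scalerA -rmorphM mulfV ?gt_eqF // scale1r /r addrC subrK.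
by rewrite [in hip z e]z_f hip_orth_expand_l // scale0r addr0.
Qed.

End GramSchmidt.

Definition bessel_bound (R : realType) (H : Hilbert R) (I : eqType) (A : I -> Prop)
    (Hi : I -> Hilbert R) (Tm : forall i, H -> Hi i) (B : R) : Prop :=
  forall x : H, finsum_le A (fun i => sqnorm (Tm i x)) (B * sqnorm x).

Section Synthesis.
Variables (R : realType) (H : Hilbert R) (I : eqType) (A : I -> Prop).
Variables (Hi : I -> Hilbert R) (Tm : forall i, H -> Hi i) (B : R).
Hypotheses (B_gt0 : 0 < B) (besselT : bessel_bound A Tm B).

(* [a i] plays the role of [Tm i^* (u i)]: this is the norm bound of the
   synthesis operator of a Bessel family. *)
Lemma sqnorm_synthesis_le (a : I -> H) (u : forall i, Hi i) (s : seq I) :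
  uniq s -> (forall i, i \in s -> A i) ->
  (forall i, i \in s -> forall x, hip (a i) x = hip (u i) (Tm i x)) ->
  sqnorm (\sum_(i <- s) a i) <= B * \sum_(i <- s) sqnorm (u i).
Proof.
move=> us As adj; set w := \sum_(i <- s) a i.
have w_u : sqnorm w = \sum_(i <- s) complex.Re (hip (u i) (Tm i w)).
  by rewrite {1}/sqnorm {1}/w hip_suml raddf_sum; apply: eq_big_seq => i /adj ->.
have : 2 * sqnorm w <= \sum_(i <- s) (B * sqnorm (u i) + sqnorm (Tm i w) / B).
  by rewrite w_u mulr_sumr; apply: ler_sum => i _; apply: Re_hip_le_scaled.
have : (\sum_(i <- s) sqnorm (Tm i w)) / B <= sqnorm w.
  by rewrite ler_pdivrMr // mulrC; apply: besselT.
rewrite big_split /= -mulr_sumr -mulr_suml; lra.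
Qed.

End Synthesis.

Section Tensor.
Variables (R : realType) (H K T : Hilbert R) (tens : H -> K -> T).
Hypothesis tensT : is_tensor tens.
Implicit Types (a : R[i]) (f : H) (g : K).

Lemma tensDZl a f f' g : tens (a *: f + f') g = a *: tens f g + tens f' g.
Proof. by case: tensT. Qed.

Lemma tensDZr a f g g' : tens f (a *: g + g') = a *: tens f g + tens f g'.
Proof. by case: tensT. Qed.

Lemma hip_tens f f' g g' : hip (tens f g) (tens f' g') = hip f f' * hip g g'.
Proof. by case: tensT. Qed.

Lemma tens0l g : tens 0 g = 0.
Proof.
have := tensDZl 1 0 0 g; rewrite scaler0 addr0 scale1r => h.
by apply: (addrI (tens 0 g)); rewrite addr0 -h.
Qed.

Lemma tens0r f : tens f 0 = 0.
Proof.
have := tensDZr 1 f 0 0; rewrite scaler0 addr0 scale1r => h.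
by apply: (addrI (tens f 0)); rewrite addr0 -h.
Qed.

Lemma tensDl f f' g : tens (f + f') g = tens f g + tens f' g.
Proof. by rewrite -[f]scale1r tensDZl !scale1r. Qed.

Lemma tensDr f g g' : tens f (g + g') = tens f g + tens f g'.
Proof. by rewrite -[g]scale1r tensDZr !scale1r. Qed.

Lemma tensZl a f g : tens (a *: f) g = a *: tens f g.
Proof. by rewrite -[a *: f]addr0 tensDZl tens0l addr0. Qed.

Lemma tensZr a f g : tens f (a *: g) = a *: tens f g.
Proof. by rewrite -[a *: g]addr0 tensDZr tens0r addr0. Qed.

Lemma tensBl f f' g : tens (f - f') g = tens f g - tens f' g.
Proof. by rewrite tensDl -scaleN1r tensZl scaleN1r. Qed.

Lemma tensBr f g g' : tens f (g - g') = tens f g - tens f g'.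
Proof. by rewrite tensDr -scaleN1r tensZr scaleN1r. Qed.

Lemma tens_suml (I : Type) (s : seq I) (F : I -> H) g :
  tens (\sum_(k <- s) F k) g = \sum_(k <- s) tens (F k) g.
Proof. by elim: s => [|k s IH]; rewrite ?big_nil ?tens0l // !big_cons tensDl IH. Qed.

Lemma tens_sumr (I : Type) (s : seq I) (F : I -> K) f :
  tens f (\sum_(k <- s) F k) = \sum_(k <- s) tens f (F k).
Proof. by elim: s => [|k s IH]; rewrite ?big_nil ?tens0r // !big_cons tensDr IH. Qed.

Lemma sqnorm_tens f g : sqnorm (tens f g) = sqnorm f * sqnorm g.
Proof. by rewrite /sqnorm hip_tens !hipxx -rmorphM. Qed.

Lemma sqnorm_tens_orthonormal n (e : nat -> K) (x : nat -> H) : orthonormal n e ->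
  sqnorm (\sum_(0 <= m < n) tens (x m) (e m)) = \sum_(0 <= m < n) sqnorm (x m).
Proof.
move=> one; rewrite /sqnorm hip_suml raddf_sum; apply: eq_big_nat => m /andP[_ mn].
rewrite hip_sumr (eq_big_nat _ _ (F2 := fun l => (m == l)%:R * hip (x m) (x l))).
  by rewrite sum_nat_delta.
by move=> l /andP[_ ln]; rewrite hip_tens one // mulrC.
Qed.

Lemma sqnorm_tens_sub_le f f' g g' :
  sqnorm (tens f g - tens f' g') <=
  2 * (sqnorm (f - f') * sqnorm g) + 2 * (sqnorm f' * sqnorm (g - g')).
Proof.
have -> : tens f g - tens f' g' = tens (f - f') g + tens f' (g - g').
  by rewrite tensBl tensBr addrA subrK.
by rewrite -!sqnorm_tens sqnormD_le.
Qed.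

Lemma sqnorm_tens_sub_small f f' g g' (d : R) :
  d <= 1 -> sqnorm (f - f') <= d -> sqnorm (g - g') <= d ->
  sqnorm (tens f g - tens f' g') <= d * (4 + 4 * sqnorm g' + 2 * sqnorm f').
Proof.
move=> d1 ff' gg'; have := sqnorm_tens_sub_le f f' g g'.
have g_le : sqnorm g <= 2 + 2 * sqnorm g'.
  by have := sqnormD_le (g - g') g'; rewrite subrK; lra.
have : sqnorm (f - f') * sqnorm g <= d * (2 + 2 * sqnorm g').
  by apply: ler_pM; rewrite ?sqnorm_ge0.
have : sqnorm f' * sqnorm (g - g') <= sqnorm f' * d.
  by apply: ler_wpM2l; rewrite ?sqnorm_ge0.
lra.
Qed.

(* A vector orthogonal to all elementary tensors is orthogonal to their dense
   span, hence to itself. *)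
Lemma tens_orthogonal_eq0 (t : T) : (forall f g, hip (tens f g) t = 0) -> t = 0.
Proof.
move=> tO; have small eps : 0 < eps -> sqnorm t < eps.
  move=> eps0; case: tensT => _ _ _ /(_ t (Num.sqrt eps)%:C).
  rewrite ltcR sqrtr_gt0 => /(_ eps0) [s].
  set S := \sum_(p <- s) _; rewrite hnorm_lt ?ltcR ?sqrtr_gt0 //= sqr_sqrtr ?ltW //.
  have SO : hip t (- S) = 0.
    by rewrite hipNr hipC hip_suml big1 ?conjc0 ?oppr0 // => p _; rewrite hipZl tO mulr0.
  by rewrite sqnorm_sum_orth // sqnormN; have := sqnorm_ge0 S; lra.
apply: sqnorm_eq0; apply/eqP; rewrite eq_le sqnorm_ge0 andbT leNgt; apply/negP => t0.
by have := small (sqnorm t / 2); rewrite divr_gt0 // => /(_ isT); lra.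
Qed.

End Tensor.

Lemma op_tensor_adjoint (R : realType) (H K T H2 K2 T2 : Hilbert R)
    (tens : H -> K -> T) (tens2 : H2 -> K2 -> T2)
    (L : H -> H2) (G : K -> K2) (Ls : H2 -> H) (Gs : K2 -> K)
    (LG : T -> T2) (LGs : T2 -> T) :
  is_tensor tens -> is_tensor tens2 -> is_adjoint L Ls -> is_adjoint G Gs ->
  is_op_tensor tens tens2 L G LG -> is_adjoint LG LGs ->
  forall p q, LGs (tens2 p q) = tens (Ls p) (Gs q).
Proof.
move=> tensT tens2T LLs GGs [_ LGE] LGLGs p q; apply/eqP; rewrite -subr_eq0; apply/eqP.
apply: (tens_orthogonal_eq0 tensT) => f g.
by rewrite hipBr -LGLGs LGE (hip_tens tens2T) (hip_tens tensT) LLs GGs subrr.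
Qed.


Section PairSums.
Variables (I J : eqType) (V : nmodType).
Implicit Types (s : seq (I * J)) (F : I * J -> V).

Lemma big_fst_regroup s F :
  \sum_(p <- s) F p = \sum_(i <- undup (unzip1 s)) \sum_(p <- s | p.1 == i) F p.
Proof.
symmetry; under eq_bigr => i _ do rewrite big_mkcond.
rewrite exchange_big /=; apply: eq_big_seq => p ps.
rewrite (bigD1_seq p.1) ?undup_uniq ?mem_undup ?map_f //= eqxx big1 ?addr0 //.
by move=> i /negbTE; rewrite eq_sym => ->.
Qed.

Lemma big_pairs_split (P0 : seq I) (Q0 : seq J) s F :
  uniq P0 -> uniq Q0 -> uniq s -> {subset [seq (i, j) | i <- P0, j <- Q0] <= s} ->
  \sum_(p <- s) F p =
    \sum_(i <- P0) \sum_(j <- Q0) F (i, j)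
    + \sum_(p <- s | (p.1 \in P0) && (p.2 \notin Q0)) F p
    + \sum_(p <- s | p.1 \notin P0) F p.
Proof.
move=> uP uQ us PQs; rewrite (bigID (fun p => p.1 \in P0)) (bigID (fun p => p.2 \in Q0)) /=.
congr (_ + _ + _); rewrite -big_allpairs -big_filter; apply: perm_big.
apply: uniq_perm; first exact: filter_uniq.
  by rewrite allpairs_uniq // => -[? ?] [? ?] _ _ [-> ->].
move=> [i j].
rewrite mem_filter /=; apply/idP/idP => [/andP[/andP[iP jQ] _]|ijPQ].
  by apply/allpairsP; exists (i, j).
by rewrite PQs // andbT; case/allpairsP: ijPQ => -[? ?] [/= ? ? [-> ->]]; apply/andP.
Qed.

End PairSums.

Section TensorSynthesis.
Variables (R : realType) (H K T : Hilbert R) (tens : H -> K -> T).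
Hypothesis tensT : is_tensor tens.
Variables (I J : eqType) (DI : I -> Prop) (DJ : J -> Prop).
Variables (Hi : I -> Hilbert R) (Tm : forall i, H -> Hi i) (Ba : R).
Variables (Kj : J -> Hilbert R) (Sm : forall j, K -> Kj j) (Bb : R).
Hypotheses (Ba_gt0 : 0 < Ba) (besselT : bessel_bound DI Tm Ba).
Hypotheses (Bb_gt0 : 0 < Bb) (besselS : bessel_bound DJ Sm Bb).
Variables (a : I -> H) (u : forall i, Hi i) (b : J -> K) (z : forall j, Kj j).
Hypothesis a_u : forall i, DI i -> forall x, hip (a i) x = hip (u i) (Tm i x).
Hypothesis b_z : forall j, DJ j -> forall y, hip (b j) y = hip (z j) (Sm j y).

(* Expanding the [y i] in an orthonormal basis [e] of their span splits the
   sum into orthogonal pieces [tens (x m) (e m)], each a synthesis sum. *)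
Lemma sqnorm_tens_synthesis_le (y : I -> K) (M : R) (s : seq I) :
  uniq s -> (forall i, i \in s -> DI i) -> (forall i, i \in s -> sqnorm (y i) <= M) ->
  sqnorm (\sum_(i <- s) tens (a i) (y i)) <= Ba * M * \sum_(i <- s) sqnorm (u i).
Proof.
move=> us sDI yM; have [n [e [one y_e]]] := gram_schmidt [seq y i | i <- s].
have {}y_e i : i \in s -> y i = orth_expand n e (y i) by move/(map_f y)/y_e.
pose C i m := hip (y i) (e m); pose x m := \sum_(i <- s) C i m *: a i.
have -> : \sum_(i <- s) tens (a i) (y i) = \sum_(0 <= m < n) tens (x m) (e m).
  transitivity (\sum_(i <- s) \sum_(0 <= m < n) C i m *: tens (a i) (e m)).
    apply: eq_big_seq => i si; rewrite {1}(y_e i si) (tens_sumr tensT).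
    by apply: eq_bigr => m _; rewrite (tensZr tensT).
  rewrite exchange_big; apply: eq_bigr => m _.
  by rewrite (tens_suml tensT); apply: eq_bigr => i _; rewrite (tensZl tensT).
have x_le m : sqnorm (x m) <= Ba * \sum_(i <- s) sqnorm (C i m *: u i).
  apply: (sqnorm_synthesis_le Ba_gt0 besselT) => // i si w.
  by rewrite !hipZl a_u //; apply: sDI.
have C_y : \sum_(0 <= m < n) \sum_(i <- s) sqnorm (C i m *: u i) =
           \sum_(i <- s) sqnorm (u i) * sqnorm (y i).
  rewrite exchange_big; apply: eq_big_seq => i si.
  rewrite [sqnorm (y i)]/sqnorm {1 2}(y_e i si) hip_orthonormal_sum // raddf_sum.
  by rewrite mulr_sumr; apply: eq_bigr => m _; rewrite sqnormZ mulrC.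
rewrite (sqnorm_tens_orthonormal tensT) //.
apply: (le_trans (ler_sum_nat (fun m _ => x_le m))); rewrite -mulr_sumr C_y.
rewrite -mulrA ler_pM2l // mulr_sumr big_seq [leRHS]big_seq.
by apply: ler_sum => i si; rewrite mulrC ler_wpM2r ?sqnorm_ge0 ?yM.
Qed.

Lemma sqnorm_tens_pairs_le (PU : I -> Prop) (PZ : J -> Prop) (Mu Mz : R)
    (s : seq (I * J)) :
  (forall i, PU i -> DI i) -> (forall j, PZ j -> DJ j) ->
  finsum_le PU (fun i => sqnorm (u i)) Mu -> finsum_le PZ (fun j => sqnorm (z j)) Mz ->
  uniq s -> (forall p, p \in s -> PU p.1 /\ PZ p.2) ->
  sqnorm (\sum_(p <- s) tens (a p.1) (b p.2)) <= Ba * (Bb * Mz) * Mu.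
Proof.
move=> PU_DI PZ_DJ uMu zMz us sP; rewrite big_fst_regroup.
pose row i := [seq p.2 | p <- s & p.1 == i].
have row_uniq i : uniq (row i).
  rewrite map_inj_in_uniq ?filter_uniq // => -[i1 j1] [i2 j2].
  by rewrite !mem_filter /= => /andP[/eqP -> _] /andP[/eqP -> _] /= ->.
have rowPZ i j : j \in row i -> PZ j.
  by case/mapP => p; rewrite mem_filter => /andP[_ /sP[_ ?]] ->.
have row_sum i : \sum_(p <- s | p.1 == i) tens (a p.1) (b p.2) =
                 tens (a i) (\sum_(j <- row i) b j).
  by rewrite big_map (tens_sumr tensT) big_filter; apply: eq_bigr => p /eqP ->.
rewrite (eq_bigr _ (fun i _ => row_sum i)).
have fstPU i : i \in undup (unzip1 s) -> PU i.
  by rewrite mem_undup => /mapP [p /sP[? _] ->].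
apply: le_trans (sqnorm_tens_synthesis_le (M := Bb * Mz) _ _ _) _.
- exact: undup_uniq.
- by move=> i /fstPU /PU_DI.
- move=> i _; apply: le_trans (sqnorm_synthesis_le Bb_gt0 besselS (u := z) _ _ _) _ => //.
  + by move=> j /rowPZ /PZ_DJ.
  + by move=> j /rowPZ /PZ_DJ /b_z.
  + by rewrite ler_pM2l //; apply: zMz => // j /rowPZ.
apply: ler_wpM2l; first by rewrite !mulr_ge0 ?(ltW Ba_gt0) ?(ltW Bb_gt0) ?(finsum_le_ge0 zMz).
exact: uMu (undup_uniq _) fstPU.
Qed.

(* Beyond the block [P0 x Q0], the two pieces of [big_pairs_split] are small
   by the tails of [u] and of [z] respectively. *)
Lemma has_usum_tens (Bu Bz : R) (A : H) (B : K) :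
  finsum_le DI (fun i => sqnorm (u i)) Bu -> finsum_le DJ (fun j => sqnorm (z j)) Bz ->
  has_usum DI a A -> has_usum DJ b B ->
  has_usum (fun p : I * J => DI p.1 /\ DJ p.2) (fun p => tens (a p.1) (b p.2)) (tens A B).
Proof.
move=> uBu zBz /has_usum_sqnormP aA /has_usum_sqnormP bB.
apply: (has_usum_sqnorm_le (C := 8 + 8 * sqnorm B + 4 * sqnorm A
                                  + 4 * (Ba * (Bb * Bz)) + 4 * (Ba * (Bb * Bu)))).
move=> d d_gt0 d_le1.
have [sA [usA [sAD sA_A]]] := aA d d_gt0; have [sB [usB [sBD sB_B]]] := bB d d_gt0.
have [sU [usU sUD uU]] := finsum_le_tail uBu d_gt0.
have [sZ [usZ sZD zZ]] := finsum_le_tail zBz d_gt0.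
pose P0 := undup (sA ++ sU); pose Q0 := undup (sB ++ sZ).
have P0D i : i \in P0 -> DI i by rewrite mem_undup mem_cat => /orP[/sAD|/sUD].
have Q0D j : j \in Q0 -> DJ j by rewrite mem_undup mem_cat => /orP[/sBD|/sZD].
exists [seq (i, j) | i <- P0, j <- Q0]; split.
  by rewrite allpairs_uniq ?undup_uniq // => -[? ?] [? ?] _ _ [-> ->].
split=> [_ /allpairsP [[i j] [/= /P0D ? /Q0D ? ->]] // | s1 us1 s1D PQs1].
rewrite (big_pairs_split _ (undup_uniq _) (undup_uniq _) us1 PQs1).
set Xz := \sum_(p <- s1 | _ && _) _; set Xu := \sum_(p <- s1 | _) _.
have Xz_le : sqnorm Xz <= Ba * (Bb * d) * Bu.
  rewrite /Xz -big_filter.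
  apply: (sqnorm_tens_pairs_le _ _ uBu zZ); [by [] | by move=> j [] | exact: filter_uniq |] => p.
  rewrite mem_filter => /andP[/andP[_ pQ0] /s1D[? ?]]; split=> //; split=> //.
  by apply: contra pQ0; rewrite mem_undup mem_cat orbC => ->.
have Xu_le : sqnorm Xu <= Ba * (Bb * Bz) * d.
  rewrite /Xu -big_filter.
  apply: (sqnorm_tens_pairs_le _ _ uU zBz); [by move=> i [] | by [] | exact: filter_uniq |] => p.
  rewrite mem_filter => /andP[pP0 /s1D[? ?]]; split=> //; split=> //.
  by apply: contra pP0; rewrite mem_undup mem_cat orbC => ->.
have block_le : sqnorm (tens (\sum_(i <- P0) a i) (\sum_(j <- Q0) b j) - tens A B)
                <= d * (4 + 4 * sqnorm B + 2 * sqnorm A).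
  apply: (sqnorm_tens_sub_small tensT) => //; apply/ltW.
    by apply: sA_A; rewrite ?undup_uniq // => i; rewrite mem_undup mem_cat => ->.
  by apply: sB_B; rewrite ?undup_uniq // => j; rewrite mem_undup mem_cat => ->.
have -> : \sum_(i <- P0) \sum_(j <- Q0) tens (a (i, j).1) (b (i, j).2) =
          tens (\sum_(i <- P0) a i) (\sum_(j <- Q0) b j).
  by rewrite (tens_suml tensT); apply: eq_bigr => i _; rewrite (tens_sumr tensT).
set M := tens _ _ in block_le *.
have -> : M + Xz + Xu - tens A B = (M - tens A B) + (Xz + Xu).
  by rewrite -!addrA; congr (_ + _); rewrite addrA addrC.
have := sqnormD_le (M - tens A B) (Xz + Xu); have := sqnormD_le Xz Xu.
lra.
Qed.

End TensorSynthesis.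

Section FrameOperators.
Variable R : realType.

Lemma gfusion_bessel_bound (I : int -> Prop) (H : Hilbert R) (Hi : int -> Hilbert R)
    (PV : int -> H -> H) (L : forall i, H -> Hi i) (v : int -> R) :
  gfusion_bessel I PV L v ->
  exists2 B : R, 0 < B & bessel_bound I (fun i x => (v i)%:C *: L i (PV i x)) B.
Proof.
case=> B [B0 hB]; have B_real : B = (complex.Re B)%:C by rewrite RRe_real ?gtr0_real.
exists (complex.Re B); first by rewrite -ltcR -B_real.
move=> x s us sI; have := hB x s us sI.
rewrite B_real !hnorm_sqr -rmorphM.
rewrite (eq_bigr (fun i => (v i ^+ 2 * sqnorm (L i (PV i x)))%:C)) => [|i _].
  by rewrite -rmorph_sum lecR (eq_bigr _ (fun i _ => sqnormZ_real _ _)).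
by rewrite hnorm_sqr -rmorphM.
Qed.

Lemma orth_proj_hipC (H : Hilbert R) (V : H -> Prop) (P : H -> H) :
  is_orth_proj V P -> forall x y, hip (P x) y = hip x (P y).
Proof.
move=> PV x y; have [Px xPx] := PV x; have [Py yPy] := PV y.
have -> : hip x (P y) = hip (P x) (P y).
  by apply/eqP; rewrite -subr_eq0 -hipBl xPx.
rewrite hipC [RHS]hipC; congr conjc.
by apply/eqP; rewrite -subr_eq0 -hipBl yPy.
Qed.

Lemma hip_frame_term (H H2 : Hilbert R) (V : H -> Prop) (P : H -> H)
    (L : H -> H2) (Ls : H2 -> H) :
  is_orth_proj V P -> is_adjoint L Ls -> forall (c c' : R) y x,
  hip ((c * c')%:C *: P (Ls y)) x = hip (c'%:C *: y) (c%:C *: L (P x)).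
Proof.
move=> PV LLs c c' y x.
rewrite hipZl (orth_proj_hipC PV) hipC -LLs -hipC hipZl hipZr_real rmorphM.
by rewrite -mulrA mulrCA.
Qed.

End FrameOperators.

Unset Implicit Arguments.

Theorem theorem4p2 (R : realType)
  (I J : int -> Prop)
  (H K : Hilbert R) (sepH : separable H) (sepK : separable K)
  (Hi : int -> Hilbert R) (Kj : int -> Hilbert R)
  (* closed subspaces and their orthogonal projections *)
  (V V' : int -> H -> Prop) (W W' : int -> K -> Prop)
  (PV PV' : int -> H -> H) (PW PW' : int -> K -> K)
  (hV : forall i, I i -> closed_subspace (V i) /\ is_orth_proj (V i) (PV i))
  (hV' : forall i, I i -> closed_subspace (V' i) /\ is_orth_proj (V' i) (PV' i))
  (hW : forall j, J j -> closed_subspace (W j) /\ is_orth_proj (W j) (PW j))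
  (hW' : forall j, J j -> closed_subspace (W' j) /\ is_orth_proj (W' j) (PW' j))
  (* operators Lambda_i, Lambda_i', Gamma_j, Gamma_j' and adjoints *)
  (L L' : forall i : int, H -> Hi i) (G G' : forall j : int, K -> Kj j)
  (hL : forall i, I i -> bounded_linear (L i) /\ bounded_linear (L' i))
  (hG : forall j, J j -> bounded_linear (G j) /\ bounded_linear (G' j))
  (Lstar : forall i : int, Hi i -> H) (Gstar : forall j : int, Kj j -> K)
  (hLstar : forall i, I i -> is_adjoint (L i) (Lstar i))
  (hGstar : forall j, J j -> is_adjoint (G j) (Gstar j))
  (* positive weights *)
  (v v' w w' : int -> R)
  (hv : forall i, I i -> 0 < v i /\ 0 < v' i)
  (hw : forall j, J j -> 0 < w j /\ 0 < w' j)
  (* g-fusion Bessel sequences *)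
  (bL : gfusion_bessel I PV L v) (bL' : gfusion_bessel I PV' L' v')
  (bG : gfusion_bessel J PW G w) (bG' : gfusion_bessel J PW' G' w')
  (* frame operators S_{Lambda Lambda'} and S_{Gamma Gamma'} *)
  (SL : H -> H) (SG : K -> K)
  (hSL : forall f : H, has_usum I
          (fun i => (v i * v' i)%:C *: PV i (Lstar i (L' i (PV' i f)))) (SL f))
  (hSG : forall g : K, has_usum J
          (fun j => (w j * w' j)%:C *: PW j (Gstar j (G' j (PW' j g)))) (SG g))
  (* tensor products H (x) K and H_i (x) K_j *)
  (T : Hilbert R) (tens : H -> K -> T) (hT : is_tensor tens)
  (TT : int -> int -> Hilbert R) (ttens : forall i j, Hi i -> Kj j -> TT i j)
  (hTT : forall i j, I i -> J j -> is_tensor (ttens i j))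
  (* Lambda_i (x) Gamma_j, Lambda_i' (x) Gamma_j', and the adjoint of the former *)
  (LG LG' : forall i j : int, T -> TT i j)
  (hLG : forall i j, I i -> J j -> is_op_tensor tens (ttens i j) (L i) (G j) (LG i j))
  (hLG' : forall i j, I i -> J j -> is_op_tensor tens (ttens i j) (L' i) (G' j) (LG' i j))
  (LGstar : forall i j : int, TT i j -> T)
  (hLGstar : forall i j, I i -> J j -> is_adjoint (LG i j) (LGstar i j))
  (* P_{V_i (x) W_j} = P_{V_i} (x) P_{W_j}, and likewise for the primed ones *)
  (PVW PVW' : int -> int -> T -> T)
  (hPVW : forall i j, I i -> J j -> is_op_tensor tens tens (PV i) (PW j) (PVW i j))
  (hPVW' : forall i j, I i -> J j -> is_op_tensor tens tens (PV' i) (PW' j) (PVW' i j))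
  (* S_{Lambda Lambda'} (x) S_{Gamma Gamma'} *)
  (X : T -> T) (hX : is_op_tensor tens tens SL SG X) :
  (* S (f (x) g) = (S_{Lambda Lambda'} (x) S_{Gamma Gamma'}) (f (x) g) *)
  forall (f : H) (g : K),
    has_usum (fun p : int * int => I p.1 /\ J p.2)
      (fun p : int * int =>
         (v p.1 * w p.2 * v' p.1 * w' p.2)%:C *:
           PVW p.1 p.2 (LGstar p.1 p.2 (LG' p.1 p.2 (PVW' p.1 p.2 (tens f g)))))
      (X (tens f g)).
Proof.
move=> f g; case: hX => _ ->.
have [Ba Ba0 besselL] := gfusion_bessel_bound bL.
have [Ba' _ besselL'] := gfusion_bessel_bound bL'.
have [Bb Bb0 besselG] := gfusion_bessel_bound bG.
have [Bb' _ besselG'] := gfusion_bessel_bound bG'.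
pose a i := (v i * v' i)%:C *: PV i (Lstar i (L' i (PV' i f))).
pose b j := (w j * w' j)%:C *: PW j (Gstar j (G' j (PW' j g))).
apply: (eq_has_usum (F := fun p => tens (a p.1) (b p.2))).
  move=> [i j] [/= Ii Jj]; have [_ ->] := hPVW' i j Ii Jj; have [_ ->] := hLG' i j Ii Jj.
  rewrite (op_tensor_adjoint hT (hTT i j Ii Jj) (hLstar i Ii) (hGstar j Jj)
             (hLG i j Ii Jj) (hLGstar i j Ii Jj)).
  have [_ ->] := hPVW i j Ii Jj.
  rewrite /a /b (tensZl hT) (tensZr hT) scalerA -rmorphM; congr (_%:C *: _); ring.
apply: (has_usum_tens hT Ba0 besselL Bb0 besselG
          (u := fun i => (v' i)%:C *: L' i (PV' i f))
          (z := fun j => (w' j)%:C *: G' j (PW' j g))).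
- by move=> i Ii; apply: (hip_frame_term (hV i Ii).2 (hLstar i Ii)).
- by move=> j Jj; apply: (hip_frame_term (hW j Jj).2 (hGstar j Jj)).
- exact: besselL' f.
- exact: besselG' g.
- exact: hSL.
- exact: hSG.
Qed.
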